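(* Let $\mathbb{C}$ be a partial category, $f:A\to B$ a morphism and $V\le B$. Let $m=\mathrm{id}_B{\downarrow}V:V\to B$ and $m'=\mathrm{id}_A{\downarrow}(A{\uparrow}_fV):A{\uparrow}_fV\to A$. Then the square with sides $f{\uparrow}V:A{\uparrow}_fV\to V$, $m$, $m'$ and $f$ commutes, i.e. $(f{\uparrow}V)m=m'f$, and is a pullback diagram.
   Context: Composition is diagrammatic ($fg$ = first $f$ then $g$). A partial category is a category with a partial order $\le$ on objects, a restriction operator assigning to $U\le A$ and $f:A\to B$ a morphism $f{\downarrow}U:U\to B$, and a contraction operator assigning to $V\le B$ and $f:A\to B$ an object $A{\uparrow}_fV\le A$ and a morphism $f{\uparrow}V:A{\uparrow}_fV\to V$, satisfying: (P.1) $f{\downarrow}A=f$; (P.2) $(f{\downarrow}U){\downarrow}V=f{\downarrow}V$ for $V\le U\le A$; (P.3) $(f{\downarrow}U)g=(fg){\downarrow}U$ for $g:B\to C$; (P.4) $A{\uparrow}_fB=A$ and $f{\uparrow}B=f$; (P.4') $A{\uparrow}_{\mathrm{id}_A}U=U$ and $\mathrm{id}_A{\uparrow}U=\mathrm{id}_U$ for $U\le A$; (P.5) for $W\le V\le B$: $(A{\uparrow}_fV){\uparrow}_{f{\uparrow}V}W=A{\uparrow}_fW$ and $(f{\uparrow}V){\uparrow}W=f{\uparrow}W$; (P.6) for $g:B\to C$, $W\le C$: $A{\uparrow}_f(B{\uparrow}_gW)=A{\uparrow}_{fg}W$ and $(f{\uparrow}(B{\uparrow}_gW))(g{\uparrow}W)=(fg){\uparrow}W$;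 (P.7) for $V\le B$: $(A{\uparrow}_fV){\uparrow}_{f{\downarrow}(A{\uparrow}_fV)}V=A{\uparrow}_fV$ and $(f{\downarrow}(A{\uparrow}_fV)){\uparrow}V=f{\uparrow}V$; (P.8) for $g:B\to C$, $V\le B$: $(fg){\downarrow}(A{\uparrow}_fV)=(f{\uparrow}V)(g{\downarrow}V)$. *)

(* Partial categories, presented single-sorted (arrows-only):
   one type of morphisms with dom/cod, composition total but only
   constrained on composable pairs; restriction/contraction total as
   functions but constrained (typed) only where the paper defines them. *)

Record PartialCategory := {
  Ob : Type;
  Mor : Type;
  dom : Mor -> Ob;
  cod : Mor -> Ob;
  idm : Ob -> Mor;
  (* diagrammatic composition: comp f g = "fg" = first f then g *)
  comp : Mor -> Mor -> Mor;
  le : Ob -> Ob -> Prop;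
  res : Mor -> Ob -> Mor;      (* res f U = f↓U *)
  cobj : Mor -> Ob -> Ob;      (* cobj f V = A↑_f V *)
  cmor : Mor -> Ob -> Mor;     (* cmor f V = f↑V *)

  dom_id : forall A, dom (idm A) = A;
  cod_id : forall A, cod (idm A) = A;
  dom_comp : forall f g, cod f = dom g -> dom (comp f g) = dom f;
  cod_comp : forall f g, cod f = dom g -> cod (comp f g) = cod g;
  id_comp : forall f, comp (idm (dom f)) f = f;
  comp_id : forall f, comp f (idm (cod f)) = f;
  comp_assoc : forall f g h, cod f = dom g -> cod g = dom h ->
    comp (comp f g) h = comp f (comp g h);

  le_refl : forall A, le A A;
  le_trans : forall A B C, le A B -> le B C -> le A C;
  le_antisym : forall A B, le A B -> le B A -> A = B;

  dom_res : forall f U, le U (dom f) -> dom (res f U) = U;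
  cod_res : forall f U, le U (dom f) -> cod (res f U) = cod f;
  cobj_le : forall f V, le V (cod f) -> le (cobj f V) (dom f);
  dom_cmor : forall f V, le V (cod f) -> dom (cmor f V) = cobj f V;
  cod_cmor : forall f V, le V (cod f) -> cod (cmor f V) = V;

  P1 : forall f, res f (dom f) = f;
  P2 : forall f U V, le V U -> le U (dom f) -> res (res f U) V = res f V;
  P3 : forall f g U, le U (dom f) -> cod f = dom g ->
    comp (res f U) g = res (comp f g) U;
  P4_obj : forall f, cobj f (cod f) = dom f;
  P4_mor : forall f, cmor f (cod f) = f;
  P4'_obj : forall A U, le U A -> cobj (idm A) U = U;
  P4'_mor : forall A U, le U A -> cmor (idm A) U = idm U;
  P5_obj : forall f V W, le W V -> le V (cod f) ->
    cobj (cmor f V) W = cobj f W;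
  P5_mor : forall f V W, le W V -> le V (cod f) ->
    cmor (cmor f V) W = cmor f W;
  P6_obj : forall f g W, cod f = dom g -> le W (cod g) ->
    cobj f (cobj g W) = cobj (comp f g) W;
  P6_mor : forall f g W, cod f = dom g -> le W (cod g) ->
    comp (cmor f (cobj g W)) (cmor g W) = cmor (comp f g) W;
  P7_obj : forall f V, le V (cod f) ->
    cobj (res f (cobj f V)) V = cobj f V;
  P7_mor : forall f V, le V (cod f) ->
    cmor (res f (cobj f V)) V = cmor f V;
  P8 : forall f g V, cod f = dom g -> le V (dom g) ->
    res (comp f g) (cobj f V) = comp (cmor f V) (res g V)
}.

Arguments dom {_}. Arguments cod {_}. Arguments idm {_}. Arguments comp {_}.
Arguments le {_}. Arguments res {_}. Arguments cobj {_}. Arguments cmor {_}.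

(* The commutative square
       P --h--> X
       |        |
       k        m
       v        v
       Y --g--> Z
   (h m = k g) is a pullback. *)
Definition is_pullback (C : PartialCategory) (h k m g : Mor C) : Prop :=
  dom h = dom k /\ cod h = dom m /\ cod k = dom g /\ cod m = cod g /\
  comp h m = comp k g /\
  forall x y : Mor C,
    dom x = dom y -> cod x = dom m -> cod y = dom g ->
    comp x m = comp y g ->
    exists! u : Mor C,
      cod u = dom h /\ dom u = dom x /\ comp u h = x /\ comp u k = y.

(* The square is a pullback because contraction along [f] computes it: a cone
   (x : X -> V, y : X -> A) with x m = y f factors through [A↑_f V] as
   y↑(A↑_f V).  By P.6, contracting y along A↑_f V and then f along V is the
   same as contracting the composite x m along V, and contracting x m along
   V just strips the inclusion m off again (P.7 with P.4').  P.8 then shows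
   that the factorisation followed by m' gives back y, and uniqueness is the
   same stripping argument applied to u m'. *)


Section Inclusions.

Context {C : PartialCategory}.
Implicit Types (A U : Ob C) (f u : Mor C).

Lemma dom_res_id A U : le U A -> dom (res (idm A) U) = U.
Proof. intro hU. apply dom_res. rewrite dom_id. exact hU. Qed.

Lemma cod_res_id A U : le U A -> cod (res (idm A) U) = A.
Proof. intro hU. rewrite cod_res by (rewrite dom_id; exact hU). apply cod_id. Qed.

Lemma res_id_comp f U : le U (dom f) -> comp (res (idm (dom f)) U) f = res f U.
Proof.
  intro hU.
  rewrite P3 by (rewrite ?dom_id, ?cod_id; auto).
  rewrite id_comp. reflexivity.
Qed.

Lemma res_cobj f U :
  le U (cod f) -> res f (cobj f U) = comp (cmor f U) (res (idm (cod f)) U).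
Proof.
  intro hU.
  rewrite <- P8 by (rewrite ?dom_id; auto).
  rewrite comp_id. reflexivity.
Qed.

Lemma cobj_res_id A U : le U A -> cobj (res (idm A) U) U = U.
Proof.
  intro hU. assert (hU' : le U (cod (idm A))) by (rewrite cod_id; exact hU).
  pose proof (P7_obj C (idm A) U hU') as E.
  rewrite P4'_obj in E by exact hU. exact E.
Qed.

Lemma cmor_res_id A U : le U A -> cmor (res (idm A) U) U = idm U.
Proof.
  intro hU. assert (hU' : le U (cod (idm A))) by (rewrite cod_id; exact hU).
  pose proof (P7_mor C (idm A) U hU') as E.
  rewrite !P4'_obj, P4'_mor in E by exact hU. exact E.
Qed.

Lemma cobj_comp_res_id u A U :
  cod u = U -> le U A -> cobj (comp u (res (idm A) U)) U = dom u.
Proof.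
  intros hu hU.
  rewrite <- P6_obj by (rewrite ?dom_res_id, ?cod_res_id; auto).
  rewrite cobj_res_id, <- hu by exact hU. apply P4_obj.
Qed.

Lemma cmor_comp_res_id u A U :
  cod u = U -> le U A -> cmor (comp u (res (idm A) U)) U = u.
Proof.
  intros hu hU.
  rewrite <- P6_mor by (rewrite ?dom_res_id, ?cod_res_id; auto).
  rewrite cobj_res_id, cmor_res_id, <- hu by exact hU.
  rewrite P4_mor. apply comp_id.
Qed.

End Inclusions.

Section ContractionSquare.

Context {C : PartialCategory} (f : Mor C) (V : Ob C).
Hypothesis hV : le V (cod f).

Let A' := cobj f V.
Let m := res (idm (cod f)) V.
Let m' := res (idm (dom f)) A'.

Lemma cobj_le_dom : le A' (dom f).
Proof. exact (cobj_le C f V hV). Qed.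

Lemma contraction_square_comm : comp (cmor f V) m = comp m' f.
Proof.
  unfold m, m'. rewrite res_id_comp by exact cobj_le_dom.
  symmetry. apply res_cobj. exact hV.
Qed.

Lemma contraction_square_factor (x y : Mor C) :
  cod x = V -> cod y = dom f -> comp x m = comp y f ->
  cobj y A' = dom x /\ comp (cmor y A') (cmor f V) = x.
Proof.
  intros hx hy hxy. unfold A'. split.
  - rewrite P6_obj, <- hxy by auto. apply cobj_comp_res_id; auto.
  - rewrite P6_mor, <- hxy by auto. apply cmor_comp_res_id; auto.
Qed.

Lemma contraction_square_factor_unique (u : Mor C) :
  cod u = A' -> cmor (comp u m') A' = u.
Proof. intro hu. apply cmor_comp_res_id; [exact hu | exact cobj_le_dom]. Qed.

Lemma contraction_square_factor_res (y : Mor C) :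
  cod y = dom f -> comp (cmor y A') m' = res y (cobj y A').
Proof.
  intro hy. unfold m'. rewrite <- hy.
  symmetry. apply res_cobj. rewrite hy. exact cobj_le_dom.
Qed.

End ContractionSquare.

Theorem lemma10p10 (C : PartialCategory) (f : Mor C) (V : Ob C)
  (hV : le V (cod f)) :
  comp (cmor f V) (res (idm (cod f)) V)
    = comp (res (idm (dom f)) (cobj f V)) f
  /\ is_pullback C (cmor f V) (res (idm (dom f)) (cobj f V))
                   (res (idm (cod f)) V) f.
Proof.
  pose proof (cobj_le_dom f V hV) as hA'.
  pose proof (contraction_square_comm f V hV) as Hcomm.
  split; [exact Hcomm |].
  unfold is_pullback.
  rewrite dom_cmor, cod_cmor, !dom_res_id, !cod_res_id by auto.
  do 4 (split; [reflexivity |]). split; [exact Hcomm |].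
  intros x y hxy_dom hx hy hxy.
  destruct (contraction_square_factor f V hV x y hx hy hxy) as [Hdom Hx].
  exists (cmor y (cobj f V)). repeat split.
  - apply cod_cmor. rewrite hy. exact hA'.
  - rewrite dom_cmor by (rewrite hy; exact hA'). exact Hdom.
  - exact Hx.
  - rewrite (contraction_square_factor_res f V hV y hy), Hdom, hxy_dom. apply P1.
  - intros u (hu & _ & _ & Hu). rewrite <- Hu.
    apply contraction_square_factor_unique; assumption.
Qed.
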